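(* Let $\mathbf{F}_{\Phi}$ be a fence over the Cantor space $\mathbf{C}$, where $\Phi=(\varphi^L,\varphi^U)$. (1) If $\mathbf{F}_{\Phi}$ is a Scissorhand fence, then the set $\mathbf{D}_1=\{x\in\mathbf{C} : \mathbf{F}_{\Phi}(x)\text{ is a singleton}\}$ is a dense $G_\delta$ subset of $\mathbf{C}$. (2) If $\mathbf{F}_{\Phi}$ is a two-sided Scissorhand fence, then the set $\mathbf{D}_2=\{(x,y)\in\mathbf{F}_{\Phi} : \mathbf{F}_{\Phi}(x)=\{y\}\}$ is a dense $G_\delta$ subset of $\mathbf{F}_{\Phi}$.
   Context: $\mathbf{C}$ denotes the Cantor space. For $\Phi=(\varphi^L,\varphi^U)$ with $\varphi^L,\varphi^U:\mathbf{C}\to[0,1]$, $\varphi^L$ lower semicontinuous, $\varphi^U$ upper semicontinuous and $\varphi^L\le\varphi^U$, the fence is $\mathbf{F}_{\Phi}=\{(x,t)\in\mathbf{C}\times[0,1]:\varphi^L(x)\le t\le\varphi^U(x)\}$, and for $x\in\mathbf{C}$, $\mathbf{F}_{\Phi}(x)=\{t\in[0,1]:(x,t)\in\mathbf{F}_{\Phi}\}$. A fence $\mathbf{F}_{\Phi}$ is a Scissorhand fence if the graph $\{(x,\varphi^U(x)):x\in\mathbf{C}\}$ is dense in $\mathbf{F}_{\Phi}$ and $\{x\in\mathbf{C}:\varphi^L(x)\neq\varphi^U(x)\}$ is dense in $\mathbf{C}$; it is a two-sided Scissorhand fence if in addition the graph $\{(x,\varphi^L(x)):x\in\mathbf{C}\}$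 is dense in $\mathbf{F}_{\Phi}$. *)

From HB Require Import structures.
From mathcomp Require Import all_boot all_order all_algebra.
From mathcomp Require Import all_classical all_reals all_analysis.
From mathcomp Require Import borel_hierarchy.
Set Implicit Arguments. Unset Strict Implicit. Unset Printing Implicit Defensive.
Import Order.TTheory GRing.Theory Num.Theory.
Import numFieldNormedType.Exports.
Local Open Scope classical_set_scope.
Local Open Scope ring_scope.

Section Fences.
Variable R : realType.

Definition lsc {T : topologicalType} (f : T -> R) :=
  forall x a, a < f x -> \forall y \near x, a < f y.
Definition usc {T : topologicalType} (f : T -> R) :=
  forall x a, f x < a -> \forall y \near x, f y < a.

Definition fence_pair (phiL phiU : cantor_space -> R) :=
  [/\ forall x, 0 <= phiL x /\ phiL x <= 1,
      forall x, 0 <= phiU x /\ phiU x <= 1,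
      lsc phiL, usc phiU & forall x, phiL x <= phiU x].

Definition fence (phiL phiU : cantor_space -> R) : set (cantor_space * R) :=
  [set p | 0 <= p.2 <= 1 /\ phiL p.1 <= p.2 <= phiU p.1].

Definition fence_at (phiL phiU : cantor_space -> R) (x : cantor_space) : set R :=
  [set t | fence phiL phiU (x, t)].

Definition graph_of (f : cantor_space -> R) : set (cantor_space * R) :=
  [set p | p.2 = f p.1].

End Fences.

(* relative notions for a subset F of a topological space (subspace topology) *)
Definition dense_in {T : topologicalType} (F D : set T) :=
  D `<=` F /\ F `<=` closure D.
Definition Gdelta_in {T : topologicalType} (F D : set T) :=
  exists2 G : (set T)^nat, (forall i, open (G i)) & D = F `&` \bigcap_i G i.

Definition scissorhand {R : realType} (phiL phiU : cantor_space -> R) :=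
  dense_in (fence phiL phiU) (graph_of phiU) /\
  dense [set x | phiL x != phiU x].

Definition two_sided_scissorhand {R : realType} (phiL phiU : cantor_space -> R) :=
  scissorhand phiL phiU /\ dense_in (fence phiL phiU) (graph_of phiL).

From HB Require Import structures.
From mathcomp Require Import all_boot all_order all_algebra.
From mathcomp Require Import all_classical all_reals all_analysis.
From mathcomp Require Import borel_hierarchy lra.
Import Order.TTheory GRing.Theory Num.Theory.
Import numFieldNormedType.Exports.
Local Open Scope classical_set_scope.
Local Open Scope ring_scope.
Set Implicit Arguments. Unset Strict Implicit.

(* Since phiU - phiL is upper semicontinuous, the set of x over which the
   fence is thinner than e is open, and D1 is the intersection of these sets
   for e = 1/(n+1). Each of them is dense: near a point (x, phiL x) of the
   fence lies a point (y, phiU y) of the graph of phiU, and lower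
   semicontinuity of phiL at x keeps phiL y close to phiL x, so the fence is
   thin over y. For (2), density of the graph of phiL brings every point of
   the fence near such a point (x, phiL x). Both parts then follow from the
   Baire category theorem in the compact spaces C and F_Phi. *)

Lemma dense_in_setT {T : topologicalType} (S : set T) :
  dense_in setT S <-> dense S.
Proof.
split=> [[_ TS] U [u Uu] oU|dS].
  have [y [Sy Uy]] := TS u I U (open_nbhs_nbhs (conj oU Uu)).
  by exists y.
split=> // x _ B Bx.
have [y [By Sy]] := dS (interior B) (ex_intro _ x Bx) (@open_interior _ B).
by exists y; split=> //; exact: interior_subset.
Qed.

Lemma compact_nested_cluster {T : topologicalType} (K : set T)
    (V : (set T)^nat) :
  compact K -> (forall n, V n.+1 `<=` V n) -> (forall n, V n `&` K !=set0) ->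
  exists2 l, K l & forall n, closure (V n) l.
Proof.
move=> cK Vdec VK.
have Vmono : {homo V : m n / (m <= n)%N >-> n `<=` m}.
  apply: (@homo_leq _ V (fun A B => B `<=` A)) => // [A|A B C BA CB].
    exact: subset_refl.
  exact: subset_trans CB BA.
pose F := filter_from [set: nat] (fun n => V n `&` K).
have FF : ProperFilter F.
  apply: filter_from_proper => [|n _]; last exact: VK.
  apply: filter_from_filter => [|m n _ _]; first by exists 0%N.
  exists (maxn m n) => // x [Vx Kx].
  by split; split=> //; apply: Vmono Vx; rewrite ?leq_maxl ?leq_maxr.
have [l [Kl]] := cK F FF (ex_intro2 _ _ 0%N I (fun x => @proj2 _ _)).
rewrite clusterE => Fl; exists l => // n.
have /Fl : F (V n `&` K) by exists n.
by apply: closureS => x [].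
Qed.

Section compact_Baire.
Context {T : topologicalType}.
Variables (K : set T) (O : (set T)^nat).
Hypotheses (regT : regular_space T) (oO : forall n, open (O n))
  (dO : forall n, dense_in K (K `&` O n)).

Lemma dense_in_shrink n (V : set T) : open V -> V `&` K !=set0 ->
  exists W, [/\ open W, W `&` K !=set0 & closure W `<=` V `&` O n].
Proof.
move=> oV [k [Vk Kk]].
have [q [[Kq Oq] Vq]] := (dO n).2 k Kk V (open_nbhs_nbhs (conj oV Vk)).
have /regT[B Bq BVO] : nbhs q (V `&` O n).
  by apply: open_nbhs_nbhs; split=> //; exact: openI.
exists (interior B); split; [exact: open_interior|by exists q|].
by apply: subset_trans BVO; apply: closureS; exact: interior_subset.
Qed.

Hypothesis cK : compact K.

Lemma compact_Baire : dense_in K (K `&` \bigcap_n O n).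
Proof.
split=> [x []//|p Kp W Wp].
pose S := {V : set T | open V /\ V `&` K !=set0}.
have next n (V : S) : {V' : S | closure (sval V') `<=` sval V `&` O n}.
  have [oV VK] := svalP V.
  have /cid[V' [oV' V'K cV']] := dense_in_shrink n oV VK.
  by exists (exist _ V' (conj oV' V'K)).
have V0 : open (interior W) /\ interior W `&` K !=set0.
  by split; [exact: open_interior|exists p].
pose fix V n : S := if n is m.+1 then sval (next m (V m)) else exist _ _ V0.
have cVS n : closure (sval (V n.+1)) `<=` sval (V n) `&` O n.
  exact: svalP (next n (V n)).
have [l Kl Vl] : exists2 l, K l & forall n, closure (sval (V n)) l.
  apply: compact_nested_cluster => // n; last exact: (svalP (V n)).2.
  by move=> x /subset_closure /cVS[].
have VOl n : (sval (V n) `&` O n) l by exact/cVS/Vl.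
exists l; split; first by split=> // n _; case: (VOl n).
by case: (VOl 0%N) => /interior_subset.
Qed.

End compact_Baire.

Section semicontinuity.
Context {R : realType} {T : topologicalType}.
Implicit Types f g : T -> R.

Lemma usc_lsc_open_lt f g : usc f -> lsc g -> open [set x | f x < g x].
Proof.
move=> uf lg; rewrite openE => x /= fg.
have mid : f x < (f x + g x) / 2 < g x by apply/andP; split; lra.
case/andP: mid => /(uf x) fm /(lg x) mg.
by apply: filterS2 fm mg => y /= ? ?; lra.
Qed.

Lemma lsc_usc_closed_le f g : lsc f -> usc g -> closed [set x | f x <= g x].
Proof.
move=> lf ug; rewrite -openC.
suff -> : ~` [set x | f x <= g x] = [set x | g x < f x].
  exact: usc_lsc_open_lt.
by apply/seteqP; split=> x /=; rewrite ltNge => /negP.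
Qed.

Lemma lscDr f c : lsc f -> lsc (fun x => f x + c).
Proof.
move=> lf x a; rewrite -ltrBlDr => /(lf x).
by apply: filterS => y; rewrite ltrBlDr.
Qed.

Lemma continuous_usc {f} : continuous f -> usc f.
Proof. by move=> cf x; apply: cvgr_lt; exact: cf. Qed.

Lemma continuous_lsc {f} : continuous f -> lsc f.
Proof. by move=> cf x; apply: cvgr_gt; exact: cf. Qed.

Lemma usc_comp {S : topologicalType} {h : S -> T} {f} :
  continuous h -> usc f -> usc (f \o h).
Proof. by move=> ch uf x a /(uf (h x)) /ch. Qed.

Lemma lsc_comp {S : topologicalType} {h : S -> T} {f} :
  continuous h -> lsc f -> lsc (f \o h).
Proof. by move=> ch lf x a /(lf (h x)) /ch. Qed.

End semicontinuity.

Section fence.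
Variables (R : realType) (phiL phiU : cantor_space -> R).
Hypothesis fp : fence_pair phiL phiU.

Local Notation F := (fence phiL phiU).

Let fst_continuous : continuous (@fst cantor_space R) := fun _ => cvg_fst.
Let snd_continuous : continuous (@snd cantor_space R) := fun _ => cvg_snd.

Lemma fence_atE x t : fence_at phiL phiU x t <-> phiL x <= t <= phiU x.
Proof.
case: fp => L01 U01 _ _ _; have [? ?] := L01 x; have [? ?] := U01 x.
by split=> [[]//|/andP[? ?]]; split; apply/andP; split=> /=; lra.
Qed.

Lemma fence_at_set1 x t :
  fence_at phiL phiU x = [set t] <-> phiL x = t /\ phiU x = t.
Proof.
case: (fp) => _ _ _ _ leLU; have := leLU x => LU.
split=> [Ft|[<- Ut]].
  suff : [set t] (phiL x) /\ [set t] (phiU x) by [].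
  by rewrite -Ft; split; apply/fence_atE; rewrite lexx LU.
apply/seteqP; split=> s; last by move=> /= ->; apply/fence_atE; rewrite lexx LU.
by move/fence_atE => /andP[? ?] /=; lra.
Qed.

Lemma fence_at_singletonE :
  [set x | exists t, fence_at phiL phiU x = [set t]] =
  [set x | phiL x = phiU x].
Proof.
apply/seteqP; split=> x /=; first by move=> [t /fence_at_set1[-> ->]].
by move=> LU; exists (phiL x); apply/fence_at_set1.
Qed.

Lemma fence_singleton_pointsE :
  [set p | F p /\ fence_at phiL phiU p.1 = [set p.2]] =
  F `&` fst @^-1` [set x | phiL x = phiU x].
Proof.
apply/seteqP; split=> -[x t] [Fxt] /=; first by move=> /fence_at_set1[-> ->].
move: Fxt => /[dup] /fence_atE/andP[? ?] Fxt LU.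
by split=> //; apply/fence_at_set1; split; lra.
Qed.

Lemma fence_lower x : F (x, phiL x).
Proof. by apply/(fence_atE x); case: fp => _ _ _ _ leLU; rewrite lexx leLU. Qed.

Lemma graph_upper_sub_fence : graph_of phiU `<=` F.
Proof.
move=> [x t]; rewrite /graph_of /= => ->; apply/(fence_atE x).
by case: fp => _ _ _ _ leLU; rewrite lexx leLU.
Qed.

Lemma compact_fence : compact F.
Proof.
case: fp => _ _ lL uU _.
have -> : F = ([set: cantor_space] `*` `[0, 1]) `&`
    ([set p | phiL p.1 <= p.2] `&` [set p | p.2 <= phiU p.1]).
  apply/seteqP; split=> -[x t] /=; rewrite in_itv /=.
    by move=> [t01 /andP[Lt tU]].
  by move=> [[_ t01] [Lt tU]]; split=> //; apply/andP.
apply: compact_closedI.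
  exact: compact_setX cantor_space_compact (@segment_compact _ 0 1).
apply: closedI; apply: lsc_usc_closed_le.
- exact: lsc_comp fst_continuous lL.
- exact: continuous_usc snd_continuous.
- exact: continuous_lsc snd_continuous.
- exact: usc_comp fst_continuous uU.
Qed.

Definition narrow (e : R) : set cantor_space := [set x | phiU x < phiL x + e].

Lemma open_narrow e : open (narrow e).
Proof.
by case: fp => _ _ lL uU _; apply: usc_lsc_open_lt uU _; exact: lscDr.
Qed.

Lemma bigcap_narrow : \bigcap_n narrow n.+1%:R^-1 = [set x | phiL x = phiU x].
Proof.
case: (fp) => _ _ _ _ leLU.
apply/seteqP; split=> x /= Nx; last by move=> n _; rewrite /narrow /= Nx ltrDl.
apply/eqP; rewrite eq_le leLU /=; apply/ler_addgt0Pr => e e0.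
have [n _ /(_ n (leqnn n)) ne] := near_infty_natSinv_lt (PosNum e0).
by apply/ltW/(lt_trans (Nx n I)); rewrite ltrD2l.
Qed.

Hypothesis hU : dense_in F (graph_of phiU).

Lemma closure_graph_upper_narrow e x : 0 < e ->
  closure (graph_of phiU `&` fst @^-1` narrow e) (x, phiL x).
Proof.
move=> e0 B Bx; case: fp => _ _ lL _ _.
have : nbhs (x, phiL x) (B `&` ([set p | phiL x - e / 2 < phiL p.1] `&`
                                  [set p | p.2 < phiL x + e / 2])).
  apply: filterI => //; apply: filterI.
  - by apply: (lsc_comp fst_continuous lL) => /=; lra.
  - by apply: (continuous_usc snd_continuous) => /=; lra.
move=> /(hU.2 _ (fence_lower x))[[y t] [/= tU [By [/= Ly tL]]]].
exists (y, t); split=> //; split=> //=.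
by rewrite /narrow /=; rewrite /graph_of /= in tU; lra.
Qed.

Lemma dense_narrow e : 0 < e -> dense (narrow e).
Proof.
move=> e0; apply/dense_in_setT; split=> // x _ B Bx.
have /(closure_graph_upper_narrow e0) : nbhs (x, phiL x) (fst @^-1` B).
  exact: fst_continuous.
by move=> [[y t] [[_ Ny] By]]; exists y.
Qed.

Lemma dense_in_fence_narrow e : dense_in F (graph_of phiL) -> 0 < e ->
  dense_in F (F `&` fst @^-1` narrow e).
Proof.
move=> [_ hL] e0; split=> [p []//|]; apply: subset_trans hL _.
rewrite closureE; apply: smallest_sub; first exact: closed_closure.
move=> [x t]; rewrite /graph_of /= => ->.
apply: closureS (closure_graph_upper_narrow e0) => p [Gp Np].
by split=> //; exact: graph_upper_sub_fence.
Qed.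

End fence.

Theorem proposition2p7 (R : realType) (phiL phiU : cantor_space -> R) :
  fence_pair phiL phiU ->
  (scissorhand phiL phiU ->
     let D1 := [set x | exists t, fence_at phiL phiU x = [set t]] in
     dense D1 /\ Gdelta D1) /\
  (two_sided_scissorhand phiL phiU ->
     let D2 := [set p | fence phiL phiU p /\ fence_at phiL phiU p.1 = [set p.2]] in
     dense_in (fence phiL phiU) D2 /\ Gdelta_in (fence phiL phiU) D2).
Proof.
move=> fp; pose O n := narrow phiL phiU n.+1%:R^-1.
have oO n : open (O n) := open_narrow fp _.
split=> [[hU _] D1|[[hU _] hL] D2].
  rewrite {}/D1 (fence_at_singletonE fp) -(bigcap_narrow fp).
  split; last by exists O.
  apply/dense_in_setT; rewrite -[X in dense_in _ X]setTI.
  apply: compact_Baire uniform_regular oO _ cantor_space_compact => n.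
  by rewrite setTI; apply/dense_in_setT/(dense_narrow fp hU).
rewrite {}/D2 (fence_singleton_pointsE fp) -(bigcap_narrow fp) preimage_bigcap.
have oO' n : open (fst @^-1` O n : set (cantor_space * R)).
  by apply: open_comp (oO n) => p _; exact: cvg_fst.
split; last by exists (fun n => fst @^-1` O n).
apply: compact_Baire uniform_regular oO' _ (compact_fence fp) => n.
exact: dense_in_fence_narrow.
Qed.
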